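(* For every graph $G$ with $n$ vertices and $m$ edges, \[ 2\sum_{uv\in E(G)} d(u)d(v)\geq 4m^2+\sum_{u\in V(G)}\bigl(d^3(u)-n\,d^2(u)\bigr). \]
   Context: All graphs are finite, simple and undirected. $d(u)$ is the degree of vertex $u$; the sum over $uv\in E(G)$ runs over each edge once. *)

From mathcomp Require Import all_boot all_order all_algebra.
Set Implicit Arguments. Unset Strict Implicit. Unset Printing Implicit Defensive.
Import Order.TTheory GRing.Theory Num.Theory.

Definition simple_graph (T : finType) (e : rel T) : Prop :=
  symmetric e /\ irreflexive e.

Definition deg (T : finType) (e : rel T) (u : T) : nat := #|[set v | e u v]|.

Definition edges (T : finType) (e : rel T) : {set {set T}} :=
  [set E : {set T} | [exists u, exists v, (e u v) && (E == [set u; v])]].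

From mathcomp Require Import all_boot all_order all_algebra.
Import Order.TTheory GRing.Theory Num.Theory.
From mathcomp Require Import ring.

Set Implicit Arguments.
Unset Strict Implicit.
Unset Printing Implicit Defensive.

Local Open Scope ring_scope.

(* Write [d] for the degree function.  Summing [d u * d v] over all ordered
   pairs gives [(sum_u d u)^2 = 4 m^2]; the adjacent pairs contribute
   [2 sum_(uv in E) d u d v], and since u has [n - d u] non-neighbours,
   [sum_u (d u^3 - n d u^2) = - sum_(u, v non-adjacent) d u^2].  The claim
   thus reduces to [sum_(u, v non-adjacent) (d u^2 - d u d v) >= 0], which
   holds because non-adjacency is symmetric: twice that sum is
   [sum_(u, v non-adjacent) (d u - d v)^2]. *)

Lemma sum_rel_sqr_sub_mul_ge0 (R : realDomainType) (T : finType) (r : rel T)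
    (f : T -> R) :
  symmetric r -> 0 <= \sum_u \sum_(v | r u v) (f u ^+ 2 - f u * f v).
Proof.
move=> r_sym; set S := \sum_u _.
have S_swap : S = \sum_u \sum_(v | r u v) (f v ^+ 2 - f v * f u).
  rewrite /S (exchange_big_dep xpredT) //=; apply: eq_bigr => u _.
  by apply: eq_bigl => v; rewrite r_sym.
rewrite -(pmulrn_lge0 _ (isT : 0 < 2)%N) mulr2n.
rewrite {2}S_swap /S -big_split /=; apply: sumr_ge0 => u _.
rewrite -big_split /=; apply: sumr_ge0 => v _.
have -> : f u ^+ 2 - f u * f v + (f v ^+ 2 - f v * f u) = (f u - f v) ^+ 2.
  by ring.
exact: sqr_ge0.
Qed.

Section SimpleGraph.
Variables (T : finType) (e : rel T).
Hypotheses (e_sym : symmetric e) (e_irr : irreflexive e).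

Lemma edge_set2_eq (a b x y : T) : e a b ->
  (e x y && ([set x; y] == [set a; b])) = ((x, y) \in [set (a, b); (b, a)]).
Proof.
move=> eab; apply/idP/idP.
- case/andP=> exy /eqP xy_ab.
  have /set2P x_ab : x \in [set a; b] by rewrite -xy_ab set21.
  have /set2P y_ab : y \in [set a; b] by rewrite -xy_ab set22.
  have : x != y by apply: contraTneq exy => ->; rewrite e_irr.
  rewrite in_set2 !xpair_eqE.
  by case: x_ab => ->; case: y_ab => ->; rewrite ?eqxx ?orbT.
- rewrite in_set2 !xpair_eqE; case/orP=> /andP[/eqP -> /eqP ->].
  + by rewrite eab eqxx.
  + by rewrite e_sym eab setUC eqxx.
Qed.

Lemma sum_adj_edges (V : nmodType) (F : {set T} -> V) :
  \sum_u \sum_(v | e u v) F [set u; v] = (\sum_(E in edges e) F E) *+ 2.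
Proof.
rewrite pair_big_dep /=.
rewrite (partition_big (fun p : T * T => [set p.1; p.2]) (mem (edges e))) /=;
  last first.
  move=> [x y] /= exy; rewrite inE; apply/existsP; exists x; apply/existsP.
  by exists y; rewrite exy eqxx.
rewrite -sumrMnl; apply: eq_bigr => E.
rewrite inE => /existsP[a /existsP[b /andP[eab /eqP ->]]].
rewrite (eq_bigr (fun _ => F [set a; b])); last by move=> p /andP[_ /eqP ->].
rewrite (eq_bigl (mem [set (a, b); (b, a)])); last first.
  by move=> [x y] /=; rewrite edge_set2_eq.
have ab_ba : (a, b) != (b, a).
  by rewrite xpair_eqE; apply: contraTN eab => /andP[/eqP -> _]; rewrite e_irr.
by rewrite sumr_const cards2 ab_ba.
Qed.

Lemma sum_adj_const (V : nmodType) (u : T) (c : V) :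
  \sum_(v | e u v) c = c *+ deg e u.
Proof.
by rewrite -sumr_const; apply: eq_bigl => v; rewrite inE.
Qed.

Lemma sum_deg_edges (R : pzSemiRingType) :
  \sum_u (deg e u)%:R = (#|edges e|%:R *+ 2 : R).
Proof.
rewrite -sumr_const -sum_adj_edges; apply: eq_bigr => u _.
by rewrite sum_adj_const.
Qed.

Lemma sum_edges_prod (R : comPzSemiRingType) (f : T -> R) :
  (\sum_(E in edges e) \prod_(x in E) f x) *+ 2 =
  \sum_u \sum_(v | e u v) f u * f v.
Proof.
rewrite -sum_adj_edges; apply: eq_bigr => u _; apply: eq_bigr => v euv.
have uv : u != v by apply: contraTneq euv => ->; rewrite e_irr.
by rewrite big_setU1 ?big_set1 ?inE.
Qed.

Lemma deg_cube_sub (R : pzRingType) (u : T) (x : R) : x = (deg e u)%:R ->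
  x ^+ 3 - #|T|%:R * x ^+ 2 = - \sum_(v | ~~ e u v) x ^+ 2.
Proof.
move=> x_deg.
have -> : #|T|%:R * x ^+ 2 = x ^+ 2 *+ deg e u + \sum_(v | ~~ e u v) x ^+ 2.
  by rewrite mulr_natl -sumr_const (bigID (e u)) /= sum_adj_const.
by rewrite exprSr x_deg mulr_natr opprD addrA subrr add0r.
Qed.

Lemma sum_edges_deg_prod_decomp (R : comPzRingType) (d : T -> R) :
  (forall u, d u = (deg e u)%:R) ->
  (\sum_(E in edges e) \prod_(x in E) d x) *+ 2 =
  (#|edges e|%:R *+ 2) ^+ 2 + \sum_u (d u ^+ 3 - #|T|%:R * d u ^+ 2)
  + \sum_u \sum_(v | ~~ e u v) (d u ^+ 2 - d u * d v).
Proof.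
move=> d_deg; rewrite sum_edges_prod -sum_deg_edges.
rewrite -(eq_bigr _ (fun u _ => d_deg u)) expr2 mulr_suml.
under [X in _ = X + _ + _]eq_bigr => u _ do rewrite mulr_sumr (bigID (e u)).
under [X in _ = _ + X + _]eq_bigr => u _ do rewrite (deg_cube_sub (d_deg u)).
rewrite big_split sumrN /=.
under [X in _ = _ + X]eq_bigr => u _ do rewrite sumrB.
by rewrite sumrB; ring.
Qed.

End SimpleGraph.

Theorem proposition2 (T : finType) (e : rel T) :
  simple_graph e ->
  2%:Z * (\sum_(E in edges e) \prod_(x in E) (deg e x)%:Z) >=
  4%:Z * (#|edges e|%:Z) ^+ 2
  + \sum_(u : T) ((deg e u)%:Z ^+ 3 - (#|T|)%:Z * (deg e u)%:Z ^+ 2).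
Proof.
move=> [e_sym e_irr].
have two_sqr : 4%:Z * #|edges e|%:Z ^+ 2 = (#|edges e|%:R *+ 2) ^+ 2.
  by rewrite -mulr_natl exprMn !natz.
have nonadj_sym : symmetric (fun u v => ~~ e u v).
  by move=> u v; rewrite e_sym.
rewrite two_sqr -[2%:Z]natz mulr_natl.
rewrite (@sum_edges_deg_prod_decomp _ _ e_sym e_irr _ (fun u => (deg e u)%:Z));
  last by move=> u; rewrite natz.
by rewrite !natz lerDl sum_rel_sqr_sub_mul_ge0.
Qed.
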